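(* Let $m\ge1$ and let $q^{(1)}_k,\dots,q^{(m)}_k$, $k=1,\dots,d$, be given non-negative numbers. Over all $m$-tuples $(Q^{(1)},\dots,Q^{(m)})$ of $d\times d$ positive semidefinite matrices with prescribed diagonals $Q^{(i)}_{kk}=q^{(i)}_k$ for all $i,k$, the maximal value of the operator norm $\|Q^{(1)}+\dots+Q^{(m)}\|_\infty$ is attained when each $Q^{(i)}$ is the rank one matrix with non-negative entries $Q^{(i)}_{jk}=\sqrt{q^{(i)}_jq^{(i)}_k}$.
   Context: $\|\cdot\|_\infty$ denotes the operator (spectral) norm. *)

From HB Require Import structures.
From mathcomp Require Import all_boot all_order all_algebra.
From mathcomp Require Import complex.
From mathcomp Require Import classical_sets reals.
Set Implicit Arguments. Unset Strict Implicit. Unset Printing Implicit Defensive.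
Import Order.TTheory GRing.Theory Num.Theory.
Local Open Scope ring_scope.
Local Open Scope classical_set_scope.

Definition ctrmx (R : realType) (m n : nat) (A : 'M[R[i]]_(m, n)) : 'M[R[i]]_(n, m) :=
  (map_mx Num.conj A)^T.

Definition vnorm (R : realType) (d : nat) (x : 'cV[R[i]]_d) : R :=
  Num.sqrt (complex.Re (\sum_(j < d) `|x j 0| ^+ 2)).

Definition opnorm (R : realType) (d : nat) (A : 'M[R[i]]_d) : R :=
  sup [set r : R | exists x : 'cV[R[i]]_d, vnorm x <= 1 /\ r = vnorm (A *m x)].

Definition psd (R : realType) (d : nat) (A : 'M[R[i]]_d) : Prop :=
  forall x : 'cV[R[i]]_d, 0 <= (ctrmx x *m A *m x) 0 0.

Definition rank1_sqrt (R : realType) (d : nat) (q : 'I_d -> R) : 'M[R[i]]_d :=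
  \matrix_(j, k) (Num.sqrt (q j * q k))%:C%C.

(* If [Q] is positive semidefinite then each 2x2 principal minor is, so
   [|Q_jk| <= sqrt (Q_jj Q_kk)]; hence the entries of [Q^(1) + ... + Q^(m)] are
   bounded in modulus by those of the sum [P] of the rank-one matrices.  For such
   a non-negative dominating matrix, [|Mx| <= P|x|] entrywise, and [|x|] is again
   a unit vector, so [||M|| <= ||P||]. *)
From HB Require Import structures.
From mathcomp Require Import all_boot all_order all_algebra.
From mathcomp Require Import complex.
From mathcomp Require Import classical_sets reals ring lra.
Set Implicit Arguments. Unset Strict Implicit. Unset Printing Implicit Defensive.
Import Order.TTheory GRing.Theory Num.Theory.
Local Open Scope ring_scope.
Local Open Scope classical_set_scope.

Import Normc.

Lemma big_ord_two_support (V : nmodType) d (F : 'I_d -> V) j k : j != k ->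
  (forall l, l != j -> l != k -> F l = 0) -> \sum_l F l = F j + F k.
Proof.
move=> ne_jk F0; rewrite (bigD1 j) //= (bigD1 k) 1?eq_sym //= big1 ?addr0 ?addrA //.
by move=> l /andP[ne_lk ne_lj]; apply: F0.
Qed.

Section OperatorNorm.
Variable R : realType.
Local Notation C := R[i].

Lemma normCE (z : C) : `|z| = (normc z)%:C%C.
Proof. by []. Qed.

Lemma normc_ge0 (z : C) : 0 <= normc z.
Proof. by case: z => a b /=; rewrite sqrtr_ge0. Qed.

Lemma vnormE d (x : 'cV[C]_d) : vnorm x = Num.sqrt (\sum_j normc (x j 0) ^+ 2).
Proof.
rewrite /vnorm; congr Num.sqrt.
under eq_bigr do rewrite normCE -rmorphXn.
by rewrite -rmorph_sum.
Qed.

Lemma ler_vnorm d (x y : 'cV[C]_d) :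
  (forall j, `|x j 0| <= `|y j 0|) -> vnorm x <= vnorm y.
Proof.
move=> le_xy; rewrite !vnormE ler_sqrt ?sumr_ge0 // => [|j _]; last exact: sqr_ge0.
apply: ler_sum => j _; rewrite lerXn2r ?nnegrE ?normc_ge0 //.
by rewrite -lecR -!normCE.
Qed.

Lemma vnorm_le1_coord d (x : 'cV[C]_d) k : vnorm x <= 1 -> `|x k 0| <= 1.
Proof.
rewrite vnormE -sqrtr1 ler_sqrt // => le_sum1.
have : normc (x k 0) ^+ 2 <= 1.
  apply: le_trans le_sum1; rewrite (bigD1 k) //= lerDl sumr_ge0 // => l _.
  exact: sqr_ge0.
by rewrite expr_le1 ?normc_ge0 // normCE -lecR.
Qed.

Lemma has_ubound_opnorm d (M : 'M[C]_d) :
  has_ubound [set r | exists x : 'cV[C]_d, vnorm x <= 1 /\ r = vnorm (M *m x)].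
Proof.
exists (vnorm (\col_j \sum_k `|M j k|)) => _ [x [x_le1 ->]].
apply: ler_vnorm => j; rewrite !mxE [X in _ <= X]ger0_norm ?sumr_ge0 //.
apply: le_trans (ler_norm_sum _ _ _) _; apply: ler_sum => k _.
by rewrite normrM ler_piMr ?vnorm_le1_coord.
Qed.

Lemma opnorm_le_entrywise d (M N : 'M[C]_d) :
  (forall j k, `|M j k| <= N j k) -> opnorm M <= opnorm N.
Proof.
move=> le_MN; apply: ge_sup.
  exists (vnorm (M *m 0)), 0; split=> //.
  by rewrite vnormE big1 ?sqrtr0 // => j _; rewrite mxE normc0 expr0n.
move=> _ [x [x_le1 ->]]; set absx := \col_k `|x k 0|.
have absx_le1 : vnorm absx <= 1.
  by apply: le_trans x_le1; apply: ler_vnorm => j; rewrite mxE normr_id.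
apply: (@le_trans _ _ (vnorm (N *m absx))); last first.
  by apply: ub_le_sup; [exact: has_ubound_opnorm | exists absx].
apply: ler_vnorm => j; rewrite !mxE.
have le_Mx : `|\sum_k M j k * x k 0| <= \sum_k N j k * absx k 0.
  apply: le_trans (ler_norm_sum _ _ _) _; apply: ler_sum => k _.
  by rewrite mxE normrM ler_wpM2r.
by rewrite [X in _ <= X]ger0_norm // (le_trans _ le_Mx).
Qed.

End OperatorNorm.

Section PositiveSemidefinite.
Variable R : realType.
Local Notation C := R[i].

Lemma conjC_real (r : R) : (r%:C%C)^* = r%:C%C :> C.
Proof. by rewrite -[_^*]/(_ +i* _)%C oppr0. Qed.

Lemma ctrmx_form_sum d (A : 'M[C]_d) (x : 'cV[C]_d) :
  (ctrmx x *m A *m x) 0 0 = \sum_j \sum_k (x j 0)^* * A j k * x k 0.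
Proof.
rewrite mxE; under eq_bigr do rewrite mxE big_distrl /=.
rewrite exchange_big /=; apply: eq_bigr => j _; apply: eq_bigr => k _.
by rewrite /ctrmx !mxE.
Qed.

Definition psd2 (a b : R) (u v : C) : Prop := forall t s : C,
  0 <= t^* * a%:C%C * t + t^* * u * s + s^* * v * t + s^* * b%:C%C * s.

Lemma psd_psd2 d (A : 'M[C]_d) (q : 'I_d -> R) j k :
  psd A -> (forall k, A k k = (q k)%:C%C) -> j != k ->
  psd2 (q j) (q k) (A j k) (A k j).
Proof.
move=> A_psd A_diag ne_jk t s; rewrite -!A_diag.
have := A_psd (\col_l (if l == j then t else if l == k then s else 0)).
have coord0 l : l != j -> l != k ->
    (\col_l (if l == j then t else if l == k then s else 0)) l 0 = 0.
  by move=> ne_lj ne_lk; rewrite mxE (negbTE ne_lj) (negbTE ne_lk).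
rewrite ctrmx_form_sum (big_ord_two_support ne_jk); last first.
  by move=> l ne_lj ne_lk; rewrite big1 // => l' _; rewrite coord0 // conjC0 !mul0r.
rewrite !(big_ord_two_support ne_jk);
  try by move=> l ne_lj ne_lk; rewrite (coord0 l) // mulr0.
by rewrite !mxE eqxx eq_sym (negbTE ne_jk) eqxx !addrA.
Qed.

Lemma nneg_form_le_mul (a b c : R) : 0 <= a -> 0 <= b -> 0 <= c ->
  (forall x y : R, 0 <= a * x ^+ 2 - 2 * c * x * y + b * c * y ^+ 2) ->
  c <= a * b.
Proof.
move=> a0 b0 c0 form_ge0.
have form1 : 0 <= b * (a * b - c).
  by move: (form_ge0 b 1); congr (_ <= _); ring.
(* the witness [(c, a + 1)] also covers the degenerate case [b = 0] *)
have form2 : 0 <= c * ((a + 1) ^+ 2 * b - (a + 2) * c).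
  by move: (form_ge0 c (a + 1)); congr (_ <= _); ring.
have [b_eq0|b_neq0] := eqVneq b 0.
  by move: form2; rewrite b_eq0 mulr0; nra.
have b_gt0 : 0 < b by rewrite lt_def b_neq0.
nra.
Qed.

Lemma psd2_conj (a b : R) (u v : C) : psd2 a b u v -> v = u^*.
Proof.
case: u v => u1 u2 [v1 v2] uv_psd.
move: (uv_psd 1 1); rewrite -[_^*]/(_ +i* _)%C; simpc => /andP[/eqP im1 _].
move: (uv_psd 1 'i%C); rewrite -![_^*]/(_ +i* _)%C; simpc => /andP[/eqP imi _].
by congr (_ +i* _)%C; lra.
Qed.

Lemma psd2_norm_le (a b : R) (u v : C) : 0 <= a -> 0 <= b ->
  psd2 a b u v -> `|u| <= (Num.sqrt (a * b))%:C%C.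
Proof.
move=> a0 b0 uv_psd; rewrite normCE lecR.
have -> : normc u = Num.sqrt (normc u ^+ 2) by rewrite sqrtr_sqr ger0_norm ?normc_ge0.
rewrite ler_sqrt ?mulr_ge0 //.
apply: nneg_form_le_mul => // [|x y]; first exact: sqr_ge0.
have v_def := psd2_conj uv_psd; subst v.
move/(_ x%:C%C (- (y%:C%C * u^*))): uv_psd.
case: u => u1 u2; rewrite -![_^*]/(_ +i* _)%C; simpc => /andP[_].
rewrite /= sqr_sqrtr ?(addr_ge0 (sqr_ge0 u1) (sqr_ge0 u2)) //.
by lra.
Qed.

Lemma psd_entry_le d (A : 'M[C]_d) (q : 'I_d -> R) :
  psd A -> (forall k, 0 <= q k) -> (forall k, A k k = (q k)%:C%C) ->
  forall j k, `|A j k| <= rank1_sqrt q j k.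
Proof.
move=> A_psd q0 A_diag j k; rewrite mxE.
have [<-|ne_jk] := eqVneq j k.
  rewrite A_diag normCE lecR -expr2 sqrtr_sqr ger0_norm //=.
  by rewrite expr0n addr0 sqrtr_sqr ger0_norm.
exact: psd2_norm_le (psd_psd2 A_psd A_diag ne_jk).
Qed.

Lemma rank1_sqrt_psd d (q : 'I_d -> R) : (forall k, 0 <= q k) -> psd (rank1_sqrt q).
Proof.
move=> q0 x; rewrite ctrmx_form_sum.
set z := \sum_k (Num.sqrt (q k))%:C%C * x k 0.
have -> : \sum_j \sum_k (x j 0)^* * rank1_sqrt q j k * x k 0 = z^* * z.
  rewrite rmorph_sum big_distrl; apply: eq_bigr => j _.
  rewrite big_distrr; apply: eq_bigr => k _.
  by rewrite mxE sqrtrM // rmorphM /= rmorphM /= conjC_real; ring.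
by rewrite mulrC mul_conjC_ge0.
Qed.

Lemma rank1_sqrt_diag d (q : 'I_d -> R) k :
  0 <= q k -> rank1_sqrt q k k = (q k)%:C%C.
Proof. by move=> q0; rewrite mxE -expr2 sqrtr_sqr ger0_norm. Qed.

End PositiveSemidefinite.

Theorem mainTheorem5 (R : realType) (m d : nat) (q : 'I_m -> 'I_d -> R) :
  (0 < m)%N ->
  (forall i k, 0 <= q i k) ->
  [/\ (forall i, psd (rank1_sqrt (q i))),
      (forall i k, rank1_sqrt (q i) k k = (q i k)%:C%C) &
      (forall Q : 'I_m -> 'M[R[i]]_d,
          (forall i, psd (Q i)) ->
          (forall i k, Q i k k = (q i k)%:C%C) ->
          opnorm (\sum_(i < m) Q i) <= opnorm (\sum_(i < m) rank1_sqrt (q i)))].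
Proof.
move=> _ q0; split=> [i|i k|Q Q_psd Q_diag].
- exact: rank1_sqrt_psd.
- exact: rank1_sqrt_diag.
apply: opnorm_le_entrywise => j k; rewrite !summxE.
apply: le_trans (ler_norm_sum _ _ _) _; apply: ler_sum => i _.
exact: psd_entry_le.
Qed.
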